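(* Let $G=(V,E)$ be a finite graph with boundary $B\subseteq V$, $|B|\ge2$. Let $d_1\le\cdots\le d_{|B|}$ be the degrees in $G$ of the boundary vertices, and let $d_1'\le\cdots\le d_{|B|}'$ be the degree sequence of the induced subgraph $G'=(B,E(B,B))$. Let $S_1=\sum_{i=1}^{|B|}d_i$, $S_2=\sum_{i=1}^{|B|}d_i^2$, $S_1'=\sum_{i=1}^{|B|}d_i'$. Then for $k=1,2,\ldots,|B|$, $$\sigma_k(G,B)\le\frac{1}{|B|}\left\{S_1+\sqrt{\frac{k-1}{|B|-k+1}\Big[|B|(S_2+S_1')-S_1^2\Big]}\right\}\le\frac{1}{|B|}\left\{S_1+\sqrt{\frac{k-1}{|B|-k+1}\Big[|B|(S_2+S_1)-S_1^2\Big]}\right\}.$$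
   Context: A boundary is $B\subseteq V$ with $|B|\ge2$. $E(B,B)$ is the set of edges of $G$ with both endpoints in $B$. Rayleigh quotient: $R(f)=\frac{\sum_{\{x,y\}\in E}(f(x)-f(y))^2}{\sum_{x\in B}f(x)^2}$ ($+\infty$ if $f|_B=0$); for $1\le k\le|B|$, $\sigma_k(G,B)=\min_{W\subseteq\mathbb{R}^V,\dim W=k}\max_{0\ne f\in W}R(f)$. *)

From HB Require Import structures.
From mathcomp Require Import all_boot all_order all_algebra.
From mathcomp Require Import all_classical all_reals.
From mathcomp Require Import ereal.
Set Implicit Arguments. Unset Strict Implicit. Unset Printing Implicit Defensive.
Import Order.TTheory GRing.Theory Num.Theory.
Local Open Scope ring_scope.

Definition simple_graph (V : finType) (adj : rel V) : Prop :=
  symmetric adj /\ irreflexive adj.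

Definition fspace (R : realType) (V : finType) := {ffun V -> R^o}.

(* Dirichlet energy: sum over the (unordered) edges {x,y} of (f x - f y)^2.
   Each unordered edge is counted twice in the ordered double sum. *)
Definition energy (R : realType) (V : finType) (adj : rel V) (f : fspace R V) : R :=
  (\sum_(x : V) \sum_(y : V | adj x y) (f x - f y) ^+ 2) / 2.

Definition bnorm2 (R : realType) (V : finType) (B : {set V}) (f : fspace R V) : R :=
  \sum_(x in B) f x ^+ 2.

Definition rayleigh (R : realType) (V : finType) (adj : rel V) (B : {set V})
    (f : fspace R V) : \bar R :=
  if bnorm2 B f == 0 then +oo%E else (energy adj f / bnorm2 B f)%:E.

Definition steklov_sigma (R : realType) (V : finType) (adj : rel V) (B : {set V})
    (k : nat) : \bar R :=
  ereal_inf [set ereal_sup [set rayleigh adj B f | f in [set f : fspace R V |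
                 (f \in W)%VS /\ f != 0]]
            | W in [set W : {vspace fspace R V} | \dim W = k]].

Definition deg (V : finType) (adj : rel V) (x : V) : nat := #|[set y | adj x y]|.
Definition deg_in (V : finType) (adj : rel V) (B : {set V}) (x : V) : nat :=
  #|[set y in B | adj x y]|.

(* Functions supported on B turn the Rayleigh quotient into (u L u^T) / (u u^T),
   where L is the principal submatrix on B of the graph Laplacian, with
   tr L = S1 and tr L^2 = S2 + S1'.  In a real orthonormal eigenbasis of L
   (built row by row: a complex eigenvalue of L on the orthogonal complement
   of the rows found so far is real because L is symmetric), any k eigenvectors
   with eigenvalues <= lam span a k-dimensional test space, so sigma_k <= lam
   once k eigenvalues are <= lam.  This holds when lam is the mean of the
   eigenvalues plus sqrt q times their standard deviation: if t >= |B|-k+1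
   eigenvalues exceeded lam, the sum X of their deviations from the mean would
   exceed t (lam - mean), whereas Cauchy-Schwarz on both sides of the split,
   the deviations summing to 0, gives |B| X^2 <= t (|B|-t) times the sum of
   squared deviations.  The second inequality is just S1' <= S1. *)

From HB Require Import structures.
From mathcomp Require Import all_boot all_order all_algebra.
From mathcomp Require Import all_classical all_reals.
From mathcomp Require Import ereal complex.
From mathcomp Require Import ring lra zify.
Import Order.TTheory GRing.Theory Num.Theory.
Set Implicit Arguments. Unset Strict Implicit. Unset Printing Implicit Defensive.
Local Open Scope ring_scope.

Lemma trmx11 (T : Type) (A : 'M[T]_1) : A^T = A.
Proof. by apply/matrixP => i j; rewrite !ord1 mxE. Qed.

Section RealRows.
Variable R : realDomainType.

Lemma mulmx_tr_self_ge0 n (v : 'rV[R]_n) : 0 <= (v *m v^T) 0 0.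
Proof. by rewrite mxE; apply: sumr_ge0 => j _; rewrite mxE -expr2 sqr_ge0. Qed.

Lemma mulmx_tr_self_gt0 n (v : 'rV[R]_n) : v != 0 -> 0 < (v *m v^T) 0 0.
Proof.
rewrite lt_def mulmx_tr_self_ge0 andbT; apply: contra.
rewrite mxE (eq_bigr (fun j => v 0 j ^+ 2)) => [|j _]; last by rewrite !mxE expr2.
rewrite psumr_eq0 => [/allP v0|j _]; last exact: sqr_ge0.
apply/eqP/rowP => j; rewrite mxE.
by have := v0 j (mem_index_enum j); rewrite sqrf_eq0 => /eqP.
Qed.

Lemma symmetric_rotation_eq0 n (A : 'M[R]_n) (x y : 'rV_n) a b : A^T = A ->
  (x != 0) || (y != 0) ->
  x *m A = a *: x - b *: y -> y *m A = b *: x + a *: y -> b = 0.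
Proof.
move=> symA xy_neq0 xA yA.
have pos : 0 < (x *m x^T) 0 0 + (y *m y^T) 0 0.
  have := mulmx_tr_self_ge0 x; have := mulmx_tr_self_ge0 y.
  by case/orP: xy_neq0 => /mulmx_tr_self_gt0; lra.
have symxy : x *m A *m y^T = y *m A *m x^T.
  by rewrite -[RHS]trmx11 !trmx_mul trmxK symA mulmxA.
have yx : y *m x^T = x *m y^T by rewrite -[LHS]trmx11 trmx_mul trmxK.
move: symxy pos; rewrite xA yA mulmxBl mulmxDl -!scalemxAl yx.
move: (x *m x^T) (y *m y^T) (x *m y^T) => XX YY XY /rowP/(_ 0) + pos.
rewrite !mxE => /eqP; rewrite -subr_eq0.
have -> : a * XY 0 0 - b * YY 0 0 - (b * XX 0 0 + a * XY 0 0) =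
    - (b * (XX 0 0 + YY 0 0)) by ring.
by rewrite oppr_eq0 mulf_eq0 (gt_eqF pos) orbF => /eqP.
Qed.

End RealRows.

Section OrthonormalEigenrows.
Variable R : realFieldType.

Lemma mxtrace_orthonormal_eigen n (A E : 'M[R]_n) (d : 'rV[R]_n) :
  E *m E^T = 1%:M -> E *m A = diag_mx d *m E ->
  \tr A = \sum_i d 0 i /\ \tr (A *m A) = \sum_i d 0 i ^+ 2.
Proof.
move=> EE EA; have EtE : E^T *m E = 1%:M := mulmx1C EE.
have conjA : E *m A *m E^T = diag_mx d by rewrite EA -mulmxA EE mulmx1.
have trE B : \tr B = \tr (E *m B *m E^T) by rewrite mxtrace_mulC mulmxA EtE mul1mx.
split; first by rewrite trE conjA mxtrace_diag.
rewrite trE.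
have -> : E *m (A *m A) *m E^T = E *m A *m E^T *m (E *m A *m E^T).
  by rewrite !mulmxA -[E *m A *m E^T *m E]mulmxA EtE mulmx1.
rewrite conjA mul_diag_mx /mxtrace; apply: eq_bigr => i _.
by rewrite !mxE eqxx mulr1n expr2.
Qed.

Lemma rowsub_orthonormal_eigen m n k (E : 'M[R]_(m, n)) (A : 'M_n) d
    (g : 'I_k -> 'I_m) : injective g ->
  E *m E^T = 1%:M -> E *m A = diag_mx d *m E ->
  rowsub g E *m (rowsub g E)^T = 1%:M /\
  rowsub g E *m A = diag_mx (colsub g d) *m rowsub g E.
Proof.
move=> g_inj EE EA; split.
  rewrite trmx_mxsub -mxsub_mul EE; apply/matrixP => i j.
  by rewrite !mxE (inj_eq g_inj).
rewrite mul_rowsub_mx EA; apply/matrixP => i j.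
by rewrite !mul_diag_mx !mxE.
Qed.

Lemma orthonormal_eigen_quad_le k n (P : 'M[R]_(k, n)) (A : 'M_n) d lam :
  P *m P^T = 1%:M -> P *m A = diag_mx d *m P -> (forall j, d 0 j <= lam) ->
  forall c : 'rV_k,
    (c *m P *m A *m (c *m P)^T) 0 0 <= lam * (c *m P *m (c *m P)^T) 0 0.
Proof.
move=> PP PA d_le c.
have -> : c *m P *m A *m (c *m P)^T = c *m diag_mx d *m c^T.
  by rewrite trmx_mul -(mulmxA c P A) PA !mulmxA -(mulmxA _ P P^T) PP mulmx1.
have -> : c *m P *m (c *m P)^T = c *m c^T.
  by rewrite trmx_mul mulmxA -(mulmxA c P) PP mulmx1.
rewrite !mxE mulr_sumr; apply: ler_sum => j _; rewrite mul_mx_diag !mxE.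
by rewrite mulrAC [lam * _]mulrC ler_wpM2l ?d_le // -expr2 sqr_ge0.
Qed.

End OrthonormalEigenrows.

Section RealSymmetric.
Variable R : rcfType.
Local Notation toC := (real_complex R).

Lemma map_Re_mulmx_real m n (w : 'rV[R[i]]_m) (M : 'M[R]_(m, n)) :
  map_mx (@complex.Re R) (w *m map_mx toC M) = map_mx (@complex.Re R) w *m M.
Proof.
apply/rowP => j; rewrite !mxE (@raddf_sum _ _ (@complex.Re R : Rcomplex R -> R)).
by apply: eq_bigr => i _; rewrite !mxE; case: (w 0 i) => a b /=; rewrite mulr0 subr0.
Qed.

Lemma map_Im_mulmx_real m n (w : 'rV[R[i]]_m) (M : 'M[R]_(m, n)) :
  map_mx (@complex.Im R) (w *m map_mx toC M) = map_mx (@complex.Im R) w *m M.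
Proof.
apply/rowP => j; rewrite !mxE (@raddf_sum _ _ (@complex.Im R : Rcomplex R -> R)).
by apply: eq_bigr => i _; rewrite !mxE; case: (w 0 i) => a b /=; rewrite mulr0 add0r.
Qed.

Lemma map_Re_scale n (z : R[i]) (v : 'rV[R[i]]_n) :
  map_mx (@complex.Re R) (z *: v) =
  complex.Re z *: map_mx (@complex.Re R) v - complex.Im z *: map_mx (@complex.Im R) v.
Proof. by apply/rowP => j; rewrite !mxE; case: z; case: (v 0 j). Qed.

Lemma map_Im_scale n (z : R[i]) (v : 'rV[R[i]]_n) :
  map_mx (@complex.Im R) (z *: v) =
  complex.Im z *: map_mx (@complex.Re R) v + complex.Re z *: map_mx (@complex.Im R) v.
Proof.
by apply/rowP => j; rewrite !mxE; case: z; case: (v 0 j) => a b c d /=; rewrite addrC.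
Qed.

Lemma symmetric_stable_eigenvector n r (A : 'M[R]_n) (V : 'M[R]_(r, n)) :
  A^T = A -> (0 < r)%N -> row_free V -> stablemx V A ->
  exists a (v : 'rV_n), [/\ (v <= V)%MS, v != 0 & v *m A = a *: v].
Proof.
move=> symA r_gt0 freeV stableV.
have [z /eigenvalueP [w wAz w_neq0]] :=
  eigenvalue_closed (map_mx toC (conjmx V A)) r_gt0.
set v := w *m map_mx toC V.
have vA : v *m map_mx toC A = z *: v.
  by rewrite /v -mulmxA -map_mxM -[V *m A](mulmxKpV stableV) map_mxM mulmxA wAz -scalemxAl.
have v_neq0 : v != 0 by rewrite mulmx_free_eq0 // /row_free mxrank_map.
have xE : map_mx (@complex.Re R) w *m V = map_mx (@complex.Re R) v.
  by rewrite map_Re_mulmx_real.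
have yE : map_mx (@complex.Im R) w *m V = map_mx (@complex.Im R) v.
  by rewrite map_Im_mulmx_real.
clearbody v; set x := map_mx (@complex.Re R) v in xE *.
set y := map_mx (@complex.Im R) v in yE *.
have xA : x *m A = complex.Re z *: x - complex.Im z *: y.
  by rewrite -map_Re_mulmx_real vA map_Re_scale.
have yA : y *m A = complex.Im z *: x + complex.Re z *: y.
  by rewrite -map_Im_mulmx_real vA map_Im_scale.
have xy_neq0 : (x != 0) || (y != 0).
  apply: contraNT v_neq0; rewrite negb_or !negbK => /andP[/eqP x0 /eqP y0].
  apply/eqP/rowP => j; move/rowP/(_ j): x0; move/rowP/(_ j): y0; rewrite !mxE.
  by case: (v 0 j) => a b /= -> ->.
have Imz0 := symmetric_rotation_eq0 symA xy_neq0 xA yA.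
have [x_neq0|y_neq0] := orP xy_neq0.
  exists (complex.Re z), x; split => //; first by rewrite -xE submxMl.
  by rewrite xA Imz0 scale0r subr0.
exists (complex.Re z), y; split => //; first by rewrite -yE submxMl.
by rewrite yA Imz0 scale0r add0r.
Qed.

Lemma symmetric_orthonormal_eigenrows n (A : 'M[R]_n) m : A^T = A -> (m <= n)%N ->
  exists (E : 'M[R]_(m, n)) (d : 'rV[R]_m),
    E *m E^T = 1%:M /\ E *m A = diag_mx d *m E.
Proof.
move=> symA; elim: m => [|m IHm] le_m_n.
  by exists 0, 0; split; apply/matrixP => -[].
(* Writing the new size as 1 + m lets the block-matrix lemmas apply. *)
have [E [d [EE EA]]] := IHm (ltnW le_m_n); rewrite -add1n.
(* U, the orthogonal complement of the rows of E, is A-stable. *)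
set U := kermx E^T.
have rankU : (0 < \rank U)%N.
  by rewrite mxrank_ker mxrank_tr subn_gt0 (leq_ltn_trans (rank_leq_row E)).
have stableU : stablemx (row_base U) A.
  rewrite stablemx_row_base sub_kermx -mulmxA -[A]symA -trmx_mul EA.
  by rewrite trmx_mul mulmxA mulmx_ker mul0mx.
have [a [v [vU v_neq0 vA]]] :=
  symmetric_stable_eigenvector symA rankU (row_base_free U) stableU.
have vE : v *m E^T = 0 by apply/sub_kermxP; rewrite -(eq_row_base U).
have vv_gt0 := mulmx_tr_self_gt0 v_neq0.
set u := (Num.sqrt ((v *m v^T) 0 0))^-1 *: v.
have uu : u *m u^T = 1%:M.
  rewrite [LHS]mx11_scalar /u linearZ /= -scalemxAl -scalemxAr scalerA mxE.
  by rewrite -invfM -expr2 sqr_sqrtr ?ltW // mulVf ?gt_eqF.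
have uE : u *m E^T = 0 by rewrite /u -scalemxAl vE scaler0.
have Eu : E *m u^T = 0 by rewrite -[E]trmxK -trmx_mul uE trmx0.
exists (col_mx u E), (row_mx a%:M d); split.
  rewrite tr_col_mx mul_col_row uu uE Eu EE.
  by rewrite -scalar_mx_block.
have diag_a : diag_mx (a%:M : 'rV_1) = a%:M by apply/matrixP => i j; rewrite !ord1 !mxE.
rewrite mul_col_mx diag_mx_row mul_block_col !mul0mx addr0 add0r EA diag_a.
by rewrite mul_scalar_mx /u -scalemxAl vA !scalerA mulrC.
Qed.

End RealSymmetric.

Section Spread.
Variable R : realFieldType.

Lemma sqr_sum_le_card_sum_sqr (I : finType) (P : {pred I}) (e : I -> R) :
  (\sum_(i in P) e i) ^+ 2 <= #|P|%:R * \sum_(i in P) e i ^+ 2.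
Proof.
set X := \sum_(i in P) e i; set Q := \sum_(i in P) e i ^+ 2; set c : R := #|P|%:R.
have : 0 <= \sum_(i in P) (c * e i - X) ^+ 2 by apply: sumr_ge0 => i _; exact: sqr_ge0.
have -> : \sum_(i in P) (c * e i - X) ^+ 2 = c * (c * Q - X ^+ 2).
  under eq_bigr do rewrite sqrrB exprMn mulr2n.
  rewrite big_split sumrB /= big_split /= -!mulr_suml -!mulr_sumr sumr_const.
  by rewrite -mulr_natr -/c -/X -/Q; ring.
have [/card0_eq P0|P_gt0] := posnP #|P|.
  move=> _; rewrite /X big_pred0 // expr0n /= mulr_ge0 ?ler0n //.
  by apply: sumr_ge0 => i _; exact: sqr_ge0.
by rewrite pmulr_rge0 ?subr_ge0 // ltr0n.
Qed.

Lemma centered_subsum_sqr_le (I : finType) (J : {set I}) (e : I -> R) :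
  \sum_i e i = 0 ->
  #|I|%:R * (\sum_(i in J) e i) ^+ 2 <=
    #|J|%:R * #|~: J|%:R * \sum_i e i ^+ 2.
Proof.
move=> e_sum0.
have splitJ (F : I -> R) : \sum_i F i = \sum_(i in J) F i + \sum_(i in ~: J) F i.
  by rewrite (bigID (mem J)) /=; congr (_ + _); apply: eq_bigl => i; rewrite !inE.
set X := \sum_(i in J) e i.
have sumJc : \sum_(i in ~: J) e i = - X.
  by apply/eqP; rewrite -addr_eq0 addrC -splitJ e_sum0.
have sqrJ := sqr_sum_le_card_sum_sqr (mem J) e.
have sqrJc := sqr_sum_le_card_sum_sqr (mem (~: J)) e.
rewrite sumJc sqrrN -/X in sqrJc.
rewrite splitJ -(cardsC J) natrD mulrDl.
set t : R := #|J|%:R in sqrJ *; set s : R := #|~: J|%:R in sqrJc *.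
set QJ := \sum_(i in J) e i ^+ 2 in sqrJ *; set QJc := \sum_(i in ~: J) e i ^+ 2 in sqrJc *.
have -> : t * s * (QJ + QJc) = t * (s * QJc) + s * (t * QJ) by ring.
by apply: lerD; apply: ler_wpM2l; rewrite ?ler0n.
Qed.

Lemma sum_sub_mean (I : finType) (d : I -> R) : (0 < #|I|)%N ->
  \sum_i (d i - (\sum_j d j) / #|I|%:R) = 0.
Proof.
move=> I_gt0; rewrite sumrB sumr_const -mulr_natr.
by field; rewrite pnatr_eq0 -lt0n.
Qed.

Lemma sum_sqr_sub_mean (I : finType) (d : I -> R) : (0 < #|I|)%N ->
  #|I|%:R * \sum_i (d i - (\sum_j d j) / #|I|%:R) ^+ 2 =
    #|I|%:R * \sum_i d i ^+ 2 - (\sum_i d i) ^+ 2.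
Proof.
move=> I_gt0; under eq_bigr do rewrite sqrrB.
rewrite big_split sumrB /= sumrMnl -mulr_suml !sumr_const -mulr_natr.
by field; rewrite pnatr_eq0 -lt0n.
Qed.

End Spread.

Section KthBound.
Variable R : rcfType.

Lemma card_le_kth_bound (I : finType) (d : I -> R) k : (0 < k <= #|I|)%N ->
  (k <= #|[set i | (d i <= (\sum_j d j + Num.sqrt (k.-1%:R / (#|I| - k).+1%:R *
        (#|I|%:R * \sum_j d j ^+ 2 - (\sum_j d j) ^+ 2))) / #|I|%:R)%R]|)%N.
Proof.
move=> /andP[k_gt0 le_k_I]; have I_gt0 := leq_trans k_gt0 le_k_I.
have e_sum0 := sum_sub_mean d I_gt0; have nV := sum_sqr_sub_mean d I_gt0.
set N := #|I| in le_k_I e_sum0 nV *; set n : R := N%:R in e_sum0 nV *.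
have n_gt0 : 0 < n by rewrite ltr0n.
set T := \sum_j d j in e_sum0 nV *; set e := fun i => d i - T / n in e_sum0 nV.
set V := \sum_i e i ^+ 2 in nV; set q : R := k.-1%:R / (N - k).+1%:R.
have V_ge0 : 0 <= V by apply: sumr_ge0 => i _; exact: sqr_ge0.
set r := Num.sqrt _; pose a := r / n.
have a_ge0 : 0 <= a by rewrite divr_ge0 ?sqrtr_ge0 ?ltW.
have na : n * a ^+ 2 = q * V.
  rewrite /a /r expr_div_n sqr_sqrtr -nV; last by rewrite !mulr_ge0 ?divr_ge0 ?ler0n.
  by field; rewrite gt_eqF.
rewrite leqNgt; apply/negP => few.
set J := [set i | (T + r) / n < d i]; set t := #|J|; set s := #|~: J|.
have t_big : ((N - k).+1 <= t)%N.
  have sJ : ~: J = [set i | d i <= (T + r) / n].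
    by apply/setP => i; rewrite !inE -leNgt.
  by move: few (cardsC J); rewrite -sJ -/s -/t; lia.
have s_small : s%:R <= t%:R * q :> R.
  rewrite /q mulrA ler_pdivlMr ?ltr0n // -!natrM ler_nat mulnC.
  by apply: leq_mul => //; move: (cardsC J); rewrite -/s -/t; lia.
have ta_lt_X : t%:R * a < \sum_(i in J) e i.
  rewrite mulr_natl -sumr_const; apply: ltr_sum => [|i].
    move: (leq_trans (ltn0Sn _) t_big); rewrite card_gt0 => /set0Pn[i Ji].
    by apply/hasP; exists i; rewrite ?mem_index_enum.
  by rewrite inE mulrDl => lt_i; rewrite /e ltrBrDl.
have ta_ge0 : 0 <= t%:R * a by rewrite mulr_ge0 ?ler0n.
have : t%:R * s%:R * V <= n * (t%:R * a) ^+ 2.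
  have -> : n * (t%:R * a) ^+ 2 = t%:R * (t%:R * q * V) by rewrite -mulrA -na; ring.
  by rewrite -mulrA ler_wpM2l ?ler0n // ler_wpM2r.
move=> /(le_trans (centered_subsum_sqr_le J e_sum0)).
rewrite ler_pM2l // ler_pXn2r ?nnegrE //; last exact: le_trans ta_ge0 (ltW ta_lt_X).
by rewrite leNgt ta_lt_X.
Qed.

End KthBound.

Section BoundaryLaplacian.
Variables (R : realType) (V : finType) (adj : rel V) (B : {set V}).
Hypothesis adj_sym : symmetric adj.

Definition laplacian (x y : V) : R := (x == y)%:R * (deg adj x)%:R - (adj x y)%:R.

Lemma laplacianC x y : laplacian x y = laplacian y x.
Proof. by rewrite /laplacian adj_sym eq_sym; case: eqVneq => [->|]; rewrite ?mul0r. Qed.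

Lemma deg_sumE x : (deg adj x)%:R = \sum_y (adj x y)%:R :> R.
Proof.
rewrite /deg -sum1_card natr_sum big_mkcond; apply: eq_bigr => y _.
by rewrite inE; case: (adj x y).
Qed.

Lemma energy_laplacian (f : fspace R V) :
  energy adj f = \sum_x \sum_y f x * f y * laplacian x y.
Proof.
set D := \sum_x \sum_y (adj x y)%:R * f x ^+ 2.
set M := \sum_x \sum_y (adj x y)%:R * (f x * f y).
have D' : \sum_x \sum_y (adj x y)%:R * f y ^+ 2 = D.
  by rewrite exchange_big; apply: eq_bigr => x _; apply: eq_bigr => y _; rewrite adj_sym.
have -> : energy adj f = D - M.
  rewrite /energy (eq_bigr (fun x => \sum_y (adj x y)%:R * (f x - f y) ^+ 2)); last first.
    move=> x _; rewrite big_mkcond; apply: eq_bigr => y _.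
    by case: (adj x y); rewrite ?mul1r ?mul0r.
  have -> : \sum_x \sum_y (adj x y)%:R * (f x - f y) ^+ 2 = D + D - M *+ 2.
    rewrite -{2}D' /D /M -sumrMnl -big_split -sumrB; apply: eq_bigr => x _.
    by rewrite -sumrMnl -big_split -sumrB; apply: eq_bigr => y _ /=; ring.
  by rewrite -mulr_natr; field.
rewrite /D /M -sumrB; apply: eq_bigr => x _.
rewrite /laplacian; under [RHS]eq_bigr do rewrite mulrBr.
rewrite sumrB; congr (_ - _); last by apply: eq_bigr => y _; ring.
rewrite [RHS](bigD1 x) //= [X in _ = _ + X]big1 => [|y /negPf yx]; last first.
  by rewrite (eq_sym x) yx mul0r mulr0.
by rewrite eqxx mul1r addr0 deg_sumE !mulr_sumr; apply: eq_bigr => y _; ring.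
Qed.

(* Row vectors indexed by 'I_#|B| are functions on B through enum_val. *)
Definition extend0 (u : 'rV[R]_#|B|) : fspace R V :=
  [ffun x => \sum_(i | enum_val i == x) u 0 i].

Lemma extend0_enum_val u i : extend0 u (enum_val i) = u 0 i.
Proof. by rewrite ffunE (big_pred1 i) // => j; rewrite (inj_eq enum_val_inj). Qed.

Lemma extend0_notin u x : x \notin B -> extend0 u x = 0.
Proof. by move=> xB; rewrite ffunE big1 // => i /eqP ix; rewrite -ix enum_valP in xB. Qed.

Lemma extend0_is_linear : linear extend0.
Proof.
move=> a u v; apply/ffunP => x; rewrite !ffunE.
by under eq_bigr do rewrite !mxE; rewrite big_split /= scaler_sumr.
Qed.

HB.instance Definition _ :=
  GRing.isLinear.Build R 'rV[R]_#|B| (fspace R V) _ extend0 extend0_is_linear.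

Lemma extend0_eq0 u : (extend0 u == 0) = (u == 0).
Proof.
apply/eqP/eqP => [u0|->]; last exact: raddf0.
by apply/rowP => i; rewrite -extend0_enum_val u0 ffunE mxE.
Qed.

Lemma sum_supported_on_B (F : V -> R) : (forall x, x \notin B -> F x = 0) ->
  \sum_x F x = \sum_(i < #|B|) F (enum_val i).
Proof.
move=> FB; rewrite (bigID (mem B)) /= [X in _ + X]big1 ?addr0 //.
exact: big_enum_val.
Qed.

Definition boundary_laplacian : 'M[R]_#|B| :=
  \matrix_(i, j) laplacian (enum_val i) (enum_val j).

Lemma energy_extend0 u :
  energy adj (extend0 u) = (u *m boundary_laplacian *m u^T) 0 0.
Proof.
rewrite energy_laplacian sum_supported_on_B => [|x xB]; last first.
  by apply: big1 => y _; rewrite extend0_notin ?mul0r.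
rewrite !mxE; apply: eq_bigr => i _.
rewrite sum_supported_on_B => [|y yB]; last by rewrite (extend0_notin u yB) mulr0 mul0r.
rewrite !mxE mulr_suml; apply: eq_bigr => j _.
by rewrite !extend0_enum_val !mxE (laplacianC (enum_val j)); ring.
Qed.

Lemma bnorm2_extend0 u : bnorm2 B (extend0 u) = (u *m u^T) 0 0.
Proof.
rewrite /bnorm2 big_enum_val mxE; apply: eq_bigr => i _.
by rewrite extend0_enum_val mxE expr2.
Qed.

Lemma boundary_laplacian_sym : boundary_laplacian^T = boundary_laplacian.
Proof. by apply/matrixP => i j; rewrite !mxE laplacianC. Qed.

Hypothesis adj_irr : irreflexive adj.

Lemma mxtrace_boundary_laplacian :
  \tr boundary_laplacian = (\sum_(x in B) deg adj x)%:R.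
Proof.
rewrite natr_sum big_enum_val; apply: eq_bigr => i _.
by rewrite mxE /laplacian eqxx mul1r adj_irr subr0.
Qed.

Lemma deg_in_sumE x :
  (deg_in adj B x)%:R = \sum_(j < #|B|) (adj x (enum_val j))%:R :> R.
Proof.
rewrite -(big_enum_val (fun y => (adj x y)%:R)) /deg_in -sum1_card natr_sum.
rewrite big_mkcond [RHS]big_mkcond /=; apply: eq_bigr => y _.
by rewrite inE; case: (y \in B); case: (adj x y).
Qed.

Lemma mxtrace_boundary_laplacian_sqr :
  \tr (boundary_laplacian *m boundary_laplacian) =
    (\sum_(x in B) deg adj x ^ 2)%:R + (\sum_(x in B) deg_in adj B x)%:R.
Proof.
rewrite !natr_sum -big_split big_enum_val; apply: eq_bigr => i _ /=.
rewrite mxE deg_in_sumE (bigD1 i) //= [in RHS](bigD1 i) //= adj_irr add0r.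
rewrite !mxE /laplacian eqxx mul1r adj_irr subr0 natrX expr2; congr (_ + _).
apply: eq_bigr => j /negPf ji; rewrite !mxE /laplacian !(inj_eq enum_val_inj) (eq_sym i) ji.
rewrite !mul0r !sub0r mulrNN.
by rewrite adj_sym; case: (adj _ _); rewrite ?mulr1 ?mulr0.
Qed.

Lemma steklov_sigma_le_rows k (P : 'M[R]_(k, #|B|)) (lam : R) : row_free P ->
  (forall c : 'rV_k, (c *m P *m boundary_laplacian *m (c *m P)^T) 0 0 <=
                     lam * (c *m P *m (c *m P)^T) 0 0) ->
  (steklov_sigma R adj B k <= lam%:E)%E.
Proof.
move=> P_free quadP; pose X := [tuple extend0 (row j P) | j < k].
have extend0_comb (c : 'I_k -> R) : \sum_j c j *: X`_j = extend0 (\row_j c j *m P).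
  by rewrite mulmx_sum_row linear_sum; apply: eq_bigr => j _; rewrite nth_mktuple mxE linearZ.
have freeX : free X.
  apply/freeP => c /eqP; rewrite extend0_comb extend0_eq0 mulmx_free_eq0 // => /eqP/rowP c0 j.
  by have := c0 j; rewrite !mxE.
apply: le_trans (ereal_inf_lbound _) _.
  by exists <<X>>%VS; first by rewrite /= (eqP freeX) size_tuple.
apply: ge_ereal_sup => _ [f [fX f_neq0] <-].
have [c fE] : exists c, f = extend0 (c *m P).
  by exists (\row_j coord X j f); rewrite -extend0_comb; exact: coord_span.
have cP_neq0 : c *m P != 0.
  by apply: contraNneq f_neq0 => cP0; rewrite fE cP0 raddf0.
have norm_gt0 := mulmx_tr_self_gt0 cP_neq0.
rewrite fE /rayleigh bnorm2_extend0 energy_extend0 (gt_eqF norm_gt0) lee_fin.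
by rewrite ler_pdivrMr // mulrC.
Qed.

End BoundaryLaplacian.

Lemma deg_in_le_deg (V : finType) (adj : rel V) (B : {set V}) x :
  (deg_in adj B x <= deg adj x)%N.
Proof. by rewrite /deg_in setIdE subset_leq_card // subsetIr. Qed.

Theorem mainTheorem10 (R : realType) (V : finType) (adj : rel V) (B : {set V})
  (k : nat) :
  simple_graph adj -> (2 <= #|B|)%N -> (1 <= k <= #|B|)%N ->
  let b : R := #|B|%:R in
  let S1 : R := (\sum_(x in B) deg adj x)%:R in
  let S2 : R := (\sum_(x in B) (deg adj x) ^ 2)%:R in
  let S1' : R := (\sum_(x in B) deg_in adj B x)%:R in
  let q : R := (k.-1)%:R / (#|B| - k).+1%:R in
  (steklov_sigma R adj B k
     <= ((S1 + Num.sqrt (q * (b * (S2 + S1') - S1 ^+ 2))) / b)%:E)%E /\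
  (S1 + Num.sqrt (q * (b * (S2 + S1') - S1 ^+ 2))) / b
     <= (S1 + Num.sqrt (q * (b * (S2 + S1) - S1 ^+ 2))) / b.
Proof.
move=> [adj_sym adj_irr] B_ge2 k_range b S1 S2 S1' q.
have b_gt0 : 0 < b by rewrite ltr0n (leq_trans _ B_ge2).
split; last first.
  rewrite ler_pM2r ?invr_gt0 // lerD2l ler_wsqrtr // ler_wpM2l ?divr_ge0 ?ler0n //.
  by rewrite lerD2r ler_pM2l // lerD2l ler_nat leq_sum // => x _; exact: deg_in_le_deg.
have [E [d [EE EA]]] := symmetric_orthonormal_eigenrows
  (boundary_laplacian_sym R B adj_sym) (leqnn #|B|).
have [trL trL2] := mxtrace_orthonormal_eigen EE EA.
have := @card_le_kth_bound R _ (d 0) k; rewrite card_ord => /(_ k_range).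
rewrite -trL -trL2 (mxtrace_boundary_laplacian R B adj_irr).
rewrite (mxtrace_boundary_laplacian_sqr R B adj_sym adj_irr) => kI.
pose g (j : 'I_k) := enum_val (widen_ord kI j).
have g_inj : injective g.
  by move=> j j' /enum_val_inj /(congr1 val) /= /val_inj.
have [PP PA] := rowsub_orthonormal_eigen g_inj EE EA.
apply: (steklov_sigma_le_rows adj_sym (P := rowsub g E)).
  by apply/row_freeP; exists (rowsub g E)^T.
apply: orthonormal_eigen_quad_le PP PA _ => j; rewrite mxE.
by have := enum_valP (widen_ord kI j); rewrite inE.
Qed.
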